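(* Let $(\mathcal S,\mathcal A,P,r)$ be any finite MDP (general/multichain) and $(g^\star,h^\star)$ a solution of the modified Bellman equations. Let $V^0\in\mathbb R^n$, $0\le\lambda_k<1$ for $k\ge1$, and $V^k=\lambda_kV^0+(1-\lambda_k)TV^{k-1}$ for $k\ge1$ (Anchored Value Iteration). Then for every $k\ge1$, \[\Big\|\frac{V^k-V^0}{\sum_{i=1}^k\prod_{j=i}^k(1-\lambda_j)}-g^\star\Big\|_\infty\le\frac{2(1-\lambda_k)}{\sum_{i=1}^k\prod_{j=i}^k(1-\lambda_j)}\|V^0-h^\star\|_\infty.\]
   Context: An MDP $(\mathcal S,\mathcal A,P,r)$ has finite state space $\mathcal S$ ($|\mathcal S|=n$, functions identified with $\mathbb R^n$), finite action space, transition probabilities $P(s'\mid s,a)$ and bounded reward $r$. The Bellman optimality operator is $(TV)(s)=\max_a\{r(s,a)+\sum_{s'}P(s'\mid s,a)V(s')\}$. $g^\star(s)=\max_\pi\liminf_{T\to\infty}\frac1T\mathbb E_\pi[\sum_{t=0}^{T-1}r(s_t,a_t)\mid s_0=s]$. A pair $(g,h)$ solves the modified Bellman equations if $\max_a\sum_{s'}P(s'\mid s,a)g(s')=g(s)$ and $\max_a\{r(s,a)+\sum_{s'}P(s'\mid s,a)h(s')\}=h(s)+g(s)$ for all $s$, with some policy attaining both maxima simultaneously; the first component of any solution equals $g^\star$. *)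

From mathcomp Require Import all_boot all_order all_algebra.
Set Implicit Arguments. Unset Strict Implicit. Unset Printing Implicit Defensive.
Import Order.TTheory GRing.Theory Num.Theory.
Local Open Scope ring_scope.

Section MDP.
Variables (R : realFieldType) (S A : finType).

(* maximum of F over the (nonempty) finite action set A; 0 if A is empty *)
Definition fmax (F : A -> R) : R :=
  match [pick a : A] with
  | Some a0 => \big[Num.max/F a0]_(a : A) F a
  | None => 0
  end.

Definition supnorm (v : S -> R) : R := \big[Num.max/0]_(s : S) `|v s|.

(* P s a s' = P(s' | s, a) is a transition kernel *)
Definition is_kernel (P : S -> A -> S -> R) : Prop :=
  (forall s a s', 0 <= P s a s') /\ (forall s a, \sum_(s' : S) P s a s' = 1).

Definition expect (P : S -> A -> S -> R) (s : S) (a : A) (V : S -> R) : R :=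
  \sum_(s' : S) P s a s' * V s'.

Definition bellman (P : S -> A -> S -> R) (r : S -> A -> R) (V : S -> R) : S -> R :=
  fun s => fmax (fun a => r s a + expect P s a V).

Definition modified_bellman (P : S -> A -> S -> R) (r : S -> A -> R)
    (g h : S -> R) : Prop :=
  [/\ (forall s, fmax (fun a => expect P s a g) = g s),
      (forall s, fmax (fun a => r s a + expect P s a h) = h s + g s) &
      exists pi : S -> A, forall s,
        expect P s (pi s) g = g s /\ r s (pi s) + expect P s (pi s) h = h s + g s].

End MDP.

(* Call [h + t g] a shifted solution.  The modified Bellman equations say exactly
   that [T (h + t g) = h + (t + 1) g] for [t >= 0], and [T] is nonexpansive in the
   sup norm.  Writing [D_k] for the normalizer, [D_k = (1 - lam_k) (1 + D_(k-1))],
   so the shifted solutions [h + D_k g] obey the anchored recursion with anchor [h]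
   instead of [V0]; by nonexpansiveness [V^k] stays within [||V0 - h||] of them for
   every [k].  One more step, isolating the factor [1 - lam_k], gives the bound. *)
From mathcomp Require Import all_boot all_order all_algebra.
From mathcomp Require Import ring lra.
Import Order.TTheory GRing.Theory Num.Theory.
Local Open Scope ring_scope.

Set Implicit Arguments. Unset Strict Implicit. Unset Printing Implicit Defensive.

Lemma norm_convex_le (R : realDomainType) (t a b e : R) :
  0 <= t <= 1 -> `|a| <= e -> `|b| <= e -> `|t * a + (1 - t) * b| <= e.
Proof.
case/andP=> t0 t1 ae be; apply: le_trans (ler_normD _ _) _.
have t'0 : 0 <= 1 - t by lra.
rewrite !normrM (ger0_norm t0) (ger0_norm t'0).
have := ler_wpM2l t0 ae; have := ler_wpM2l t'0 be; lra.
Qed.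

Section SupNorm.
Variables (R : realFieldType) (S : finType).
Implicit Types (u v w : S -> R).

Lemma supnorm_ge0 v : 0 <= supnorm v.
Proof. by apply: (big_ind (fun x => 0 <= x)) => // x y x0 _; rewrite le_max x0. Qed.

Lemma ler_supnorm v s : `|v s| <= supnorm v.
Proof. exact: (le_bigmax _ (fun s => `|v s|) s). Qed.

Lemma supnorm_le v c : 0 <= c -> (forall s, `|v s| <= c) -> supnorm v <= c.
Proof. by move=> c0 vc; apply: bigmax_le. Qed.

Lemma supnorm_subC u w :
  supnorm (fun s => u s - w s) = supnorm (fun s => w s - u s).
Proof. by apply: eq_bigr => s _; rewrite distrC. Qed.

End SupNorm.

Section Fmax.
Variables (R : realFieldType) (A : finType).
Implicit Types (F : A -> R).

Lemma fmax_ge F a : F a <= fmax F.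
Proof.
rewrite /fmax; case: pickP => [a0 _|/(_ a)//].
exact: (le_bigmax _ F a).
Qed.

Lemma fmax_le F c : (0 < #|A|)%N -> (forall a, F a <= c) -> fmax F <= c.
Proof.
move=> /card_gt0P[a _] Fc; rewrite /fmax; case: pickP => [a0 _|/(_ a)//].
exact: bigmax_le.
Qed.

End Fmax.

Section Bellman.
Variables (R : realFieldType) (S A : finType).
Variables (P : S -> A -> S -> R) (r : S -> A -> R).
Implicit Types (u w g h : S -> R).

Lemma expectDZ s a u w t :
  expect P s a (fun x => u x + t * w x) = expect P s a u + t * expect P s a w.
Proof. by rewrite /expect mulr_sumr -big_split; apply: eq_bigr => x _ /=; ring. Qed.

Hypothesis kernelP : is_kernel P.

Lemma expect_sub_le s a u w :
  expect P s a u - expect P s a w <= supnorm (fun x => u x - w x).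
Proof.
case: kernelP => P_ge0 P_sum1.
rewrite /expect -sumrB -[leRHS]mul1r -(P_sum1 s a) mulr_suml.
apply: ler_sum => x _; rewrite -mulrBr ler_wpM2l //.
exact: le_trans (ler_norm _) (ler_supnorm (fun x => u x - w x) x).
Qed.

Hypothesis A_gt0 : (0 < #|A|)%N.

Lemma bellman_sub_le u w s :
  bellman P r u s - bellman P r w s <= supnorm (fun x => u x - w x).
Proof.
rewrite lerBlDr /bellman; apply: fmax_le => // a.
have := fmax_ge (fun a => r s a + expect P s a w) a.
have := expect_sub_le s a u w; rewrite /=; lra.
Qed.

Lemma bellman_nonexpansive u w s :
  `|bellman P r u s - bellman P r w s| <= supnorm (fun x => u x - w x).
Proof.
have := bellman_sub_le w u s; rewrite supnorm_subC.
by have := bellman_sub_le u w s; rewrite ler_norml; lra.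
Qed.

Lemma bellman_shifted_solution g h t s :
  modified_bellman P r g h -> 0 <= t ->
  bellman P r (fun x => h x + t * g x) s = h s + (t + 1) * g s.
Proof.
case=> g_fix h_fix [pi pi_opt] t0; rewrite /bellman; apply/le_anti/andP; split.
  apply: fmax_le => // a; rewrite expectDZ.
  have := fmax_ge (fun a => expect P s a g) a.
  have := fmax_ge (fun a => r s a + expect P s a h) a.
  rewrite g_fix h_fix /= => rh_le Eg_le.
  have := ler_wpM2l t0 Eg_le; lra.
apply: le_trans (fmax_ge _ (pi s)); rewrite expectDZ.
by case: (pi_opt s) => Eg Eh; rewrite addrA Eh Eg; lra.
Qed.

End Bellman.

Definition anchor_weight (R : numDomainType) (lam : nat -> R) k :=
  \sum_(1 <= i < k.+1) \prod_(i <= j < k.+1) (1 - lam j).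

Section AnchorWeight.
Variables (R : numDomainType) (lam : nat -> R).
Local Notation D := (anchor_weight lam).

Lemma anchor_weight0 : D 0 = 0.
Proof. by rewrite /anchor_weight big_geq. Qed.

Lemma anchor_weightS k : D k.+1 = (1 - lam k.+1) * (1 + D k).
Proof.
rewrite /anchor_weight big_nat_recr //= big_nat1 mulrDr mulr1 addrC.
congr (_ + _); rewrite mulr_sumr; apply: eq_big_nat => i /andP[_ ik].
by rewrite big_nat_recr 1?ltnW //= mulrC.
Qed.

Hypothesis lam_le1 : forall k, (1 <= k)%N -> lam k <= 1.

Lemma anchor_weight_ge0 k : 0 <= D k.
Proof.
elim: k => [|k IHk]; first by rewrite anchor_weight0.
by rewrite anchor_weightS mulr_ge0 ?subr_ge0 ?lam_le1 // addr_ge0.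
Qed.

End AnchorWeight.

Section AnchoredValueIteration.
Variables (R : realFieldType) (S A : finType).
Variables (P : S -> A -> S -> R) (r : S -> A -> R) (g h V0 : S -> R).
Variables (lam : nat -> R) (V : nat -> S -> R).
Hypotheses (A_gt0 : (0 < #|A|)%N) (kernelP : is_kernel P).
Hypothesis solution_gh : modified_bellman P r g h.
Hypothesis lam_range : forall k, (1 <= k)%N -> 0 <= lam k < 1.
Hypothesis V_0 : V 0%N = V0.
Hypothesis V_S : forall k, (1 <= k)%N ->
  V k = (fun s => lam k * V0 s + (1 - lam k) * bellman P r (V k.-1) s).

Local Notation D := (anchor_weight lam).
Local Notation e := (supnorm (fun s => V0 s - h s)).
Local Notation shifted n := (fun s => h s + D n * g s).

Let lam_le1 k : (1 <= k)%N -> lam k <= 1.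
Proof. by move=> /lam_range /andP[_ /ltW]. Qed.

Let bellman_shifted n s : bellman P r (shifted n) s = h s + (D n + 1) * g s.
Proof. exact/bellman_shifted_solution/anchor_weight_ge0. Qed.

Lemma avi_near_shifted_solution n s : `|V n s - shifted n s| <= e.
Proof.
elim: n s => [|n IHn] s.
  by rewrite V_0 anchor_weight0 mul0r addr0 ler_supnorm.
have near_n : supnorm (fun x => V n x - shifted n x) <= e.
  exact/supnorm_le/IHn/supnorm_ge0.
have -> : V n.+1 s - shifted n.+1 s = lam n.+1 * (V0 s - h s)
    + (1 - lam n.+1) * (bellman P r (V n) s - bellman P r (shifted n) s).
  by rewrite V_S // bellman_shifted anchor_weightS /=; ring.
apply: norm_convex_le; first by case/andP: (lam_range (ltn0Sn n)) => -> /ltW.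
  exact: ler_supnorm.
exact: le_trans (bellman_nonexpansive r kernelP A_gt0 _ _ s) near_n.
Qed.

Lemma avi_normalized_error k s :
  `|(V k.+1 s - V0 s) / D k.+1 - g s| <= 2 * (1 - lam k.+1) / D k.+1 * e.
Proof.
case/andP: (lam_range (ltn0Sn k)) => lam0 lam1.
have c_gt0 : 0 < 1 - lam k.+1 by rewrite subr_gt0.
have Dk_ge0 := anchor_weight_ge0 lam_le1 k.
have D_gt0 : 0 < D k.+1 by rewrite anchor_weightS mulr_gt0 // ltr_pwDl.
(* [V^(k+1) - V0 = (1 - lam) (T V^k - V0)], and [T (shifted k)] accounts for the
   whole [D_(k+1) g]. *)
set X := (h s - V0 s) + (bellman P r (V k) s - bellman P r (shifted k) s).
have -> : (V k.+1 s - V0 s) / D k.+1 - g s = (1 - lam k.+1) / D k.+1 * X.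
  rewrite /X V_S // bellman_shifted anchor_weightS /=; field.
  by rewrite (lt0r_neq0 c_gt0) lt0r_neq0 // ltr_pwDl.
have X_le : `|X| <= 2 * e.
  apply: le_trans (ler_normD _ _) _; rewrite mulr2n mulrDl mul1r lerD //.
    by rewrite distrC ler_supnorm.
  apply: le_trans (bellman_nonexpansive r kernelP A_gt0 _ _ s) _.
  exact/supnorm_le/avi_near_shifted_solution/supnorm_ge0.
have -> : 2 * (1 - lam k.+1) / D k.+1 * e = (1 - lam k.+1) / D k.+1 * (2 * e).
  by ring.
by rewrite normrM ger0_norm ?ler_wpM2l // divr_ge0 // ltW.
Qed.

End AnchoredValueIteration.

Theorem theorem9 (R : realFieldType) (S A : finType)
  (P : S -> A -> S -> R) (r : S -> A -> R) (g h : S -> R)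
  (V0 : S -> R) (lam : nat -> R) (V : nat -> S -> R) :
  (0 < #|A|)%N ->
  is_kernel P ->
  modified_bellman P r g h ->
  (forall k, (1 <= k)%N -> 0 <= lam k < 1) ->
  V 0%N = V0 ->
  (forall k, (1 <= k)%N ->
     V k = (fun s => lam k * V0 s + (1 - lam k) * bellman P r (V k.-1) s)) ->
  forall k, (1 <= k)%N ->
    let D := \sum_(1 <= i < k.+1) \prod_(i <= j < k.+1) (1 - lam j) in
    supnorm (fun s => (V k s - V0 s) / D - g s)
      <= 2 * (1 - lam k) / D * supnorm (fun s => V0 s - h s).
Proof.
move=> A_gt0 kernelP solution_gh lam_range V_0 V_S [//|k] _ /=.
have lam_le1 j : (1 <= j)%N -> lam j <= 1.
  by move=> /lam_range /andP[_ /ltW].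
apply: supnorm_le => [|s]; last first.
  exact: (avi_normalized_error A_gt0 kernelP solution_gh lam_range V_0 V_S).
rewrite mulr_ge0 ?supnorm_ge0 // divr_ge0 ?anchor_weight_ge0 //.
by rewrite mulr_ge0 // subr_ge0 lam_le1.
Qed.
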